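(* Consider MALIQUANT. Then, $\mathcal{SG}(0)=0$ and, for all $n\in \mathbb{N}$, $\mathcal{SG}(n)=i_o(n)$.
   Context: MALIQUANT is the impartial normal-play game on the nonnegative integers where from $n$ a player moves to a nondivisor of $n$ smaller than $n$: $\mathrm{opt}(n)=\{d: 0\le d<n,\ d\nmid n\}$ (in particular $0$ is an option of every $n>0$, and $0$ has no options). $\mathcal{SG}$ denotes the Sprague-Grundy value (mex rule). $i_o:\mathbb{N}\to\mathbb{N}$ is the index of the largest odd factor: if $n=2^k(2m-1)$ then $i_o(n)=m$. *)

From mathcomp Require Import all_boot.
Set Implicit Arguments. Unset Strict Implicit. Unset Printing Implicit Defensive.

(* Options of n in MALIQUANT: the nondivisors d of n with 0 <= d < n.
   (In MathComp, 0 %| n iff n = 0, so 0 is an option of every n > 0.) *)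
Definition opt (n : nat) : seq nat := [seq d <- iota 0 n | ~~ (d %| n)].

(* Minimum excludant: the least natural number not in s.
   Some m <= size s is always missing from s, so searching iota 0 (size s).+1 suffices. *)
Definition mex (s : seq nat) : nat :=
  find (fun m => m \notin s) (iota 0 (size s).+1).

(* Sprague-Grundy value, by recursion on the position with a fuel argument;
   fuel n.+1 suffices since all options of n are < n. *)
Fixpoint sg_fuel (k n : nat) : nat :=
  match k with
  | 0 => 0
  | k'.+1 => mex [seq sg_fuel k' d | d <- opt n]
  end.

Definition SG (n : nat) : nat := sg_fuel n.+1 n.

(* Index of the largest odd factor: if n = 2^k (2m-1) then i_o n = m. *)
Definition oddpart (n : nat) : nat := n %/ 2 ^ logn 2 n.
Definition i_o (n : nat) : nat := (oddpart n).+1./2.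

From mathcomp Require Import all_boot zify.

(* Write n = 2^k (2m - 1).  Every value v < m is the i_o-value of an option:
   v = 0 of the option 0, and v > 0 of w = 2v - 1 < 2m - 1 if w does not
   divide n, and otherwise of 2^(k+1) w, which is still below n because a
   proper odd divisor of the odd number 2m - 1 is at most a third of it.
   The value m itself is not taken by any option, since the numbers below n
   with odd part 2m - 1 are the 2^j (2m - 1) with j < k, all divisors of n.
   So i_o satisfies the mex recursion defining SG; as i_o 0 = 0, it does so
   at 0 as well, and strong induction covers every n. *)

Lemma sg_fuel_eq k1 k2 n : n < k1 -> n < k2 -> sg_fuel k1 n = sg_fuel k2 n.
Proof.
elim: k1 k2 n => [|k1 IH] [|k2] n //= n_lt_k1 n_lt_k2.
congr mex; apply/eq_in_map => d; rewrite mem_filter mem_iota /= => /andP[_ d_lt_n].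
apply: IH; lia.
Qed.

Lemma in_opt d n : (d \in opt n) = (d < n) && ~~ (d %| n).
Proof. by rewrite mem_filter mem_iota andbC. Qed.

Lemma SG_rec n : SG n = mex [seq SG d | d <- opt n].
Proof.
rewrite {1}/SG /=; congr mex; apply/eq_in_map => d.
by rewrite in_opt => /andP[d_lt_n _]; apply: sg_fuel_eq.
Qed.

Lemma mex_eq s m : (forall v, v < m -> v \in s) -> m \notin s -> mex s = m.
Proof.
move=> below_in m_notin.
have m_le_size : m <= size s.
  rewrite -[m](size_iota 0); apply: uniq_leq_size (iota_uniq 0 m) _ => v.
  by rewrite mem_iota => /below_in.
rewrite /mex; set p := fun v => v \notin s; set i := find p _.
have has_p : has p (iota 0 (size s).+1).
  by apply/hasP; exists m; rewrite // mem_iota.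
have i_lt : i < (size s).+1 by rewrite -[X in _ < X](size_iota 0) -has_find.
have p_i : p i by have := nth_find 0 has_p; rewrite nth_iota.
have not_p_before j : j < i -> ~~ p j.
  move=> j_lt_i; have := before_find 0 j_lt_i.
  by rewrite nth_iota ?add0n => [->|]; last exact: ltn_trans i_lt.
case: (ltngtP i m) => [/below_in i_in | /not_p_before | //].
  by move: p_i; rewrite /p i_in.
by rewrite /p m_notin.
Qed.

Lemma pow2_odd_decomp n : 0 < n -> exists k u, n = 2 ^ k * u.*2.+1.
Proof.
move=> n_gt0; have [o] := pfactor_coprime (isT : prime 2) n_gt0.
rewrite coprime2n => o_odd ->; exists (logn 2 n), o./2.
by rewrite mulnC; congr (_ * _); lia.
Qed.

Lemma i_o_pow2_odd k u : i_o (2 ^ k * u.*2.+1) = u.+1.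
Proof.
have odd_u2 : coprime 2 u.*2.+1 by rewrite coprime2n /= odd_double.
rewrite /i_o /oddpart lognM ?expn_gt0 // pfactorK // logn_coprime // addn0.
by rewrite mulKn ?expn_gt0 // -doubleS doubleK.
Qed.

Lemma dvdn_pow2_odd j k a b : odd a -> odd b ->
  (2 ^ j * a %| 2 ^ k * b) = (j <= k) && (a %| b).
Proof.
move=> a_odd b_odd.
have coprime_pow2 i c : odd c -> coprime (2 ^ i) c.
  by move=> c_odd; rewrite coprimeXl ?coprime2n.
rewrite Gauss_dvd ?coprime_pow2 // Gauss_dvdl ?coprime_pow2 // dvdn_Pexp2l //.
by rewrite Gauss_dvdr // coprime_sym coprime_pow2.
Qed.

Lemma odd_proper_dvd_double_lt a b : odd b -> a %| b -> a < b -> a.*2 < b.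
Proof.
move=> b_odd /dvdnP[c b_eq] a_lt_b; move: b_odd; rewrite b_eq oddM => /andP[c_odd _].
have c_ge3 : 3 <= c by case: c c_odd b_eq a_lt_b => [|[|[|c]]] //= _ ->; lia.
nia.
Qed.

Lemma i_o_below_opt n v : v < i_o n -> exists2 d, d \in opt n & i_o d = v.
Proof.
case: (posnP n) => [-> // | /pow2_odd_decomp[k [u ->]]].
rewrite i_o_pow2_odd ltnS => v_le_u.
have pow_gt0 j : 0 < 2 ^ j by rewrite expn_gt0.
case: v v_le_u => [_ | t t_lt_u].
  by exists 0; rewrite // in_opt dvd0n -lt0n andbb muln_gt0 pow_gt0.
have w_odd : odd t.*2.+1 by rewrite /= odd_double.
have u_odd : odd u.*2.+1 by rewrite /= odd_double.
have w_lt : t.*2.+1 < u.*2.+1 by lia.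
have [w_dvd | w_ndvd] := boolP (t.*2.+1 %| 2 ^ k * u.*2.+1).
- exists (2 ^ k.+1 * t.*2.+1); last exact: i_o_pow2_odd.
  rewrite in_opt dvdn_pow2_odd // ltnn andbT expnS -mulnA mulnCA ltn_pmul2l // mul2n.
  apply: odd_proper_dvd_double_lt => //.
  by rewrite -(@Gauss_dvdr _ (2 ^ k)) // coprime_sym coprimeXl ?coprime2n.
- exists (2 ^ 0 * t.*2.+1); last exact: i_o_pow2_odd.
  rewrite mul1n in_opt w_ndvd andbT; apply: leq_trans (leq_pmull _ (pow_gt0 k)); lia.
Qed.

Lemma i_o_opt_neq n d : d \in opt n -> i_o d != i_o n.
Proof.
rewrite in_opt => /andP[d_lt_n d_ndvd].
have /pow2_odd_decomp[k [u n_eq]] : 0 < n by apply: leq_ltn_trans d_lt_n.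
move: d_lt_n d_ndvd; rewrite n_eq i_o_pow2_odd.
case: (posnP d) => [-> // | /pow2_odd_decomp[j [t ->]]].
rewrite i_o_pow2_odd eqSS; case: eqP => [->|]; last by [].
have u_odd : odd u.*2.+1 by rewrite /= odd_double.
rewrite ltn_pmul2r ?ltn_exp2l; [move=> /ltnW j_le_k | by [] | by []].
by rewrite dvdn_pow2_odd // j_le_k dvdnn.
Qed.

Lemma SG_i_o n : SG n = i_o n.
Proof.
elim/ltn_ind: n => n IH; rewrite SG_rec.
have -> : [seq SG d | d <- opt n] = [seq i_o d | d <- opt n].
  by apply/eq_in_map => d; rewrite in_opt => /andP[/IH].
apply: mex_eq.
  by move=> v /i_o_below_opt[d d_opt <-]; apply: map_f.
by apply/mapP => -[d /i_o_opt_neq/negP d_neq /esym/eqP].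
Qed.

Theorem mainTheorem4 : SG 0 = 0 /\ forall n : nat, 0 < n -> SG n = i_o n.
Proof. by split=> // n _; apply: SG_i_o. Qed.
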